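(* Consider the secure distributed linearly separable computation problem with $\mathsf K_{\rm c}=1$, $\mathsf M=\frac{\mathsf K}{\mathsf N}(\mathsf N-\mathsf N_{\rm r}+1)$, and suppose $\mathsf N-\mathsf N_{\rm r}+1$ divides $\mathsf N$. Then the minimum randomness size among secure schemes achieving the optimal communication cost is $$\eta^\star=\frac{\mathsf N}{\mathsf N-\mathsf N_{\rm r}+1}-1.$$
   Context: Problem setting. $\mathsf K,\mathsf N,\mathsf N_{\rm r},\mathsf M$ are positive integers with $\mathsf N_{\rm r}\le \mathsf N$ and $\mathsf N$ dividing $\mathsf K$. Fix a prime power $\mathsf q$ (sufficiently large) and a positive integer $\mathsf L$. Datasets $D_1,\dots,D_{\mathsf K}$ are independent; message $W_k=f_k(D_k)\in\mathbb F_{\mathsf q}^{\mathsf L}$, with $W_1,\dots,W_{\mathsf K}$ mutually independent and uniform over $\mathbb F_{\mathsf q}^{\mathsf L}$. The user wants $W_1+\cdots+W_{\mathsf K}$. A secure scheme consists of an assignment $\mathcal Z_n\subseteq[\mathsf K]$, $|\mathcal Z_n|\le\mathsf M$; a random variable $Q$ on a finite set independent of the datasets, given to all servers but not the user; transmissions $X_n=\psi_n(\{W_k:k\in\mathcal Z_n\},Q)\in\mathbb F_{\mathsf q}^{\mathsf T_n}$; decodability from $\{X_n:n\in\mathcal A\}$ for every $\mathcal A\subseteq[\mathsf N]$, $|\mathcal A|=\mathsf N_{\rm r}$; security $I(W_1,\dots,W_{\mathsf K};X_1,\dots,X_{\mathsf N}\mid W_1+\cdots+W_{\mathsf K})=0$.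 Communication cost $\mathsf R=\max_{|\mathcal A|=\mathsf N_{\rm r}}\sum_{n\in\mathcal A}\mathsf T_n/\mathsf L$; randomness size $\eta=H(Q)/\mathsf L$ ($\mathsf q$-ary units). The optimal communication cost $\mathsf R^\star$ is the minimum of $\mathsf R$ over secure schemes, and $\eta^\star$ is the minimum of $\eta$ over secure schemes with $\mathsf R=\mathsf R^\star$. *)

From HB Require Import structures.
From Stdlib Require Import Reals.
From mathcomp Require Import all_boot all_order all_algebra all_field.
From mathcomp Require Import Rstruct.
Set Implicit Arguments. Unset Strict Implicit. Unset Printing Implicit Defensive.
Import Order.TTheory GRing.Theory Num.Theory.
Local Open Scope ring_scope.

Section Info.
Variables (Omega : finType) (P : Omega -> R).

Definition prob (T : eqType) (X : Omega -> T) (x : T) : R :=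
  \sum_(w : Omega | X w == x) P w.

Definition entropy (b : R) (T : eqType) (X : Omega -> T) : R :=
  - \sum_(x <- undup [seq X w | w <- enum Omega])
      (if 0 < prob X x then prob X x * (ln (prob X x) / ln b) else 0).

Definition cond_mutual_info (b : R) (T1 T2 T3 : eqType)
  (X : Omega -> T1) (Y : Omega -> T2) (Z : Omega -> T3) : R :=
  entropy b (fun w => (X w, Z w)) + entropy b (fun w => (Y w, Z w))
  - entropy b (fun w => (X w, Y w, Z w)) - entropy b Z.
End Info.

Definition msgs (F : finFieldType) (K L : nat) := {ffun 'I_K -> 'rV[F]_L}.

(* probability space: (W, Q), W uniform on (F^L)^K, Q ~ pQ independent of W *)
Definition joint_prob (F : finFieldType) (K L : nat) (Qt : finType) (pQ : Qt -> R)
  (o : msgs F K L * Qt) : R := pQ o.2 / (#|F| ^ (K * L))%:R.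

Definition is_distribution (Qt : finType) (pQ : Qt -> R) : Prop :=
  (forall q, 0 <= pQ q) /\ \sum_(q : Qt) pQ q = 1.

Definition msg_sum (F : finFieldType) (K L : nat) (w : msgs F K L) : 'rV[F]_L :=
  \sum_(k < K) w k.

Definition transmissions (F : finFieldType) (K N L : nat) (Qt : finType)
  (T : 'I_N -> nat) (psi : forall n : 'I_N, msgs F K L -> Qt -> 'rV[F]_(T n))
  (o : msgs F K L * Qt) : {dffun forall n : 'I_N, 'rV[F]_(T n)} :=
  [ffun n => psi n o.1 o.2].

(* A secure scheme: assignment Z, randomness Q ~ pQ on the finite set Qt,
   transmission lengths T, encoding functions psi. *)
Definition secure_scheme (F : finFieldType) (K N Nr M L : nat) (Qt : finType)
  (pQ : Qt -> R) (Z : 'I_N -> {set 'I_K}) (T : 'I_N -> nat)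
  (psi : forall n : 'I_N, msgs F K L -> Qt -> 'rV[F]_(T n)) : Prop :=
  [/\ is_distribution pQ,
      (forall n, (#|Z n| <= M)%N),
      (forall n (w w' : msgs F K L) q,
          (forall k, k \in Z n -> w k = w' k) -> psi n w q = psi n w' q),
      (forall A : {set 'I_N}, #|A| = Nr ->
         exists dec : {dffun forall n : 'I_N, 'rV[F]_(T n)} -> 'rV[F]_L,
           (forall x y : {dffun forall n : 'I_N, 'rV[F]_(T n)},
               (forall n, n \in A -> x n = y n) -> dec x = dec y) /\
           (forall (w : msgs F K L) q, 0 < pQ q ->
               dec (transmissions psi (w, q)) = msg_sum w))
    &
      cond_mutual_info (joint_prob pQ) (#|F|%:R)
        (fun o : msgs F K L * Qt => o.1)
        (transmissions psi)
        (fun o => msg_sum o.1) = 0].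

Definition comm_cost (N Nr L : nat) (T : 'I_N -> nat) : R :=
  (\max_(A : {set 'I_N} | #|A| == Nr) \sum_(n in A) T n)%N%:R / L%:R.

Definition rand_size (F : finFieldType) (K L : nat) (Qt : finType) (pQ : Qt -> R) : R :=
  entropy (joint_prob (F := F) (K := K) (L := L) pQ) (#|F|%:R)
    (fun o : msgs F K L * Qt => o.2) / L%:R.

Definition comm_achievable (F : finFieldType) (K N Nr M L : nat) (r : R) : Prop :=
  exists (Qt : finType) (pQ : Qt -> R) (Z : 'I_N -> {set 'I_K}) (T : 'I_N -> nat)
         (psi : forall n : 'I_N, msgs F K L -> Qt -> 'rV[F]_(T n)),
    @secure_scheme F K N Nr M L Qt pQ Z T psi /\ @comm_cost N Nr L T = r.

Definition rand_achievable (F : finFieldType) (K N Nr M L : nat) (r e : R) : Prop :=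
  exists (Qt : finType) (pQ : Qt -> R) (Z : 'I_N -> {set 'I_K}) (T : 'I_N -> nat)
         (psi : forall n : 'I_N, msgs F K L -> Qt -> 'rV[F]_(T n)),
    [/\ @secure_scheme F K N Nr M L Qt pQ Z T psi, @comm_cost N Nr L T = r & @rand_size F K L Qt pQ = e].

Definition is_min (S : R -> Prop) (v : R) : Prop := S v /\ forall x, S x -> v <= x.

(* Decodability from any N_r servers forces every message to be
   stored on at least g = N - N_r + 1 servers; the storage budget
   N M = K g makes this exact, with every server storing exactly M messages.
   A server can then be made to reveal any single message it stores, so each
   transmission has length at least L and R >= N_r.  Choosing servers one at a
   time outside the holders of the messages picked so far yields m = N/g
   messages that the transmissions determine once all other messages are
   fixed; hence H(X) >= m L, and security I(W; X | S) = 0 forces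
   H(Q) >= H(X, S) - H(S) >= (m - 1) L.  Split the servers into m groups of g and the messages into
   m blocks of M; every server of group j sends the sum of block j plus Q_j,
   where Q is uniform among the m-tuples summing to 0.  Any N_r servers meet
   every group, (X, S) is uniform on q^(m L) values and H(Q) = (m - 1) L. *)

From HB Require Import structures.
From Stdlib Require Import Reals.
From mathcomp Require Import all_boot all_order all_algebra all_field.
From mathcomp Require Import Rstruct.
From mathcomp Require Import zify ring lra.
Set Implicit Arguments. Unset Strict Implicit. Unset Printing Implicit Defensive.
Import Order.TTheory GRing.Theory Num.Theory.
Local Open Scope ring_scope.

Lemma lnM (x y : R) : 0 < x -> 0 < y -> ln (x * y) = ln x + ln y.
Proof. by move=> /RltP x_gt0 /RltP y_gt0; rewrite ln_mult. Qed.

Lemma lnV (x : R) : 0 < x -> ln x^-1 = - ln x.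
Proof. by move=> /RltP x_gt0; rewrite -RinvE ln_Rinv. Qed.

Lemma lnX (x : R) n : 0 < x -> ln (x ^+ n) = n%:R * ln x.
Proof. by move=> /RltP x_gt0; rewrite -RpowE ln_pow // INRE. Qed.

Lemma ler_ln (x y : R) : 0 < x -> x <= y -> ln x <= ln y.
Proof.
move=> x_gt0; rewrite le_eqVlt => /predU1P[-> // | /RltP xy].
by apply/RleP/Rlt_le/ln_increasing => //; apply/RltP.
Qed.

Lemma ln_gt0 (x : R) : 1 < x -> 0 < ln x.
Proof.
move=> /RltP x_gt1; have := @ln_increasing 1 x; rewrite ln_1 => ln_incr.
by apply/RltP/ln_incr => //; apply: Rlt_0_1.
Qed.

Lemma log_natX (b n : nat) : (1 < b)%N -> ln (b ^ n)%:R / ln b%:R = n%:R :> R.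
Proof.
move=> b_gt1; have lnb_gt0 : 0 < ln b%:R by rewrite ln_gt0 // ltr1n.
by rewrite natrX lnX ?ltr0n 1?ltnW // mulfK // gt_eqF.
Qed.

Lemma log_natXV (b n : nat) : (1 < b)%N -> - (ln ((b ^ n)%:R)^-1 / ln b%:R) = n%:R :> R.
Proof.
move=> b_gt1; rewrite lnV ?mulNr ?opprK ?log_natX //.
by rewrite ltr0n expn_gt0 ltnW.
Qed.

Section Entropy.
Variables (Omega : finType) (P : Omega -> R) (b : R).
Hypotheses (P_ge0 : forall w, 0 <= P w) (b_gt1 : 1 < b).

Lemma atom_le0_eq0 w : P w <= 0 -> P w = 0.
Proof. by move=> Pw_le0; apply/le_anti; rewrite Pw_le0 P_ge0. Qed.

Lemma prob_ge0 (T : eqType) (X : Omega -> T) x : 0 <= prob P X x.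
Proof. exact: sumr_ge0. Qed.

Lemma prob_ge_atom (T : eqType) (X : Omega -> T) w : P w <= prob P X (X w).
Proof. by rewrite /prob (bigD1 w) //= lerDl sumr_ge0. Qed.

Lemma entropyE (T : eqType) (X : Omega -> T) :
  entropy P b X = - \sum_w P w * (ln (prob P X (X w)) / ln b).
Proof.
rewrite /entropy; congr (- _); set s := undup _.
have Xs w : X w \in s by rewrite mem_undup map_f ?mem_enum.
transitivity (\sum_(x <- s) \sum_(w | X w == x) P w * (ln (prob P X (X w)) / ln b)).
  apply: eq_bigr => x _.
  rewrite (eq_bigr (fun w => P w * (ln (prob P X x) / ln b))); last by move=> w /eqP->.
  rewrite -mulr_suml -/(prob P X x); case: ltP => // prob_le0.
  by rewrite (@le_anti _ _ (prob P X x) 0) ?prob_le0 ?prob_ge0 ?mul0r.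
rewrite (exchange_big_dep xpredT) //=; apply: eq_bigr => w _.
rewrite -big_filter (@eq_filter _ _ (pred1 (X w))) ?big_filter.
  by rewrite -big_filter filter_pred1_uniq ?undup_uniq // big_seq1.
by move=> x; rewrite /= eq_sym.
Qed.

Lemma prob_le_coarser (T1 T2 : eqType) (Y : Omega -> T1) (V : Omega -> T2) w :
  (forall w', V w' = V w -> Y w' = Y w) -> prob P V (V w) <= prob P Y (Y w).
Proof.
move=> VY; rewrite /prob [X in X <= _]big_mkcond [X in _ <= X]big_mkcond /=.
apply: ler_sum => w' _; case: eqP => [/VY -> | _]; first by rewrite eqxx.
by case: ifP.
Qed.

Lemma entropy_term_le (T : eqType) (V : Omega -> T) w x :
  (0 < P w -> prob P V (V w) <= x) ->
  P w * (ln (prob P V (V w)) / ln b) <= P w * (ln x / ln b).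
Proof.
move=> Vx; have [Pw_gt0 | /atom_le0_eq0 ->] := ltP 0 (P w); last by rewrite !mul0r.
apply: ler_wpM2l; first exact: ltW.
apply: ler_wpM2r; first by rewrite invr_ge0 ltW // ln_gt0.
by apply: ler_ln (Vx Pw_gt0); apply: lt_le_trans Pw_gt0 (prob_ge_atom _ _).
Qed.

Lemma entropy_le_of_prob (T1 T2 : eqType) (Y : Omega -> T1) (V : Omega -> T2) :
  (forall w, 0 < P w -> prob P V (V w) <= prob P Y (Y w)) ->
  entropy P b Y <= entropy P b V.
Proof.
move=> VY; rewrite !entropyE lerN2; apply: ler_sum => w _.
exact/entropy_term_le/VY.
Qed.

Lemma entropy_le_coarser (T1 T2 : eqType) (Y : Omega -> T1) (V : Omega -> T2) :
  (forall w w', V w' = V w -> Y w' = Y w) -> entropy P b Y <= entropy P b V.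
Proof. by move=> VY; apply: entropy_le_of_prob => w _; apply/prob_le_coarser/VY. Qed.

Lemma entropy_ge_of_prob_le (T : eqType) (V : Omega -> T) c :
  \sum_w P w = 1 -> (forall w, 0 < P w -> prob P V (V w) <= c) ->
  - (ln c / ln b) <= entropy P b V.
Proof.
move=> P_sum1 Vc; rewrite entropyE -[ln c / ln b]mul1r -P_sum1 mulr_suml lerN2.
by apply: ler_sum => w _; apply/entropy_term_le/Vc.
Qed.

Lemma entropy_uniform (T : eqType) (V : Omega -> T) c :
  \sum_w P w = 1 -> (forall w, 0 < P w -> prob P V (V w) = c) ->
  entropy P b V = - (ln c / ln b).
Proof.
move=> P_sum1 Vc; rewrite entropyE -[ln c / ln b]mul1r -P_sum1 mulr_suml.
congr (- _); apply: eq_bigr => w _.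
by have [/Vc -> // | /atom_le0_eq0 ->] := ltP 0 (P w); rewrite !mul0r.
Qed.

End Entropy.

Lemma exists_subset_card (T : finType) (C : {set T}) n :
  (n <= #|C|)%N -> exists2 A : {set T}, A \subset C & #|A| = n.
Proof.
case/card_geqP=> s [s_uniq s_size sC]; exists [set x in s].
  by apply/subsetP=> x; rewrite inE => /sC.
by rewrite cardsE -s_size; apply/card_uniqP.
Qed.

Lemma card_sum_fiber (V : finZmodType) n (s : V) : (0 < n)%N ->
  #|[pred f : {ffun 'I_n -> V} | \sum_i f i == s]| = (#|V| ^ n.-1)%N.
Proof.
case: n => // n _; pose fiber s := [pred f : {ffun 'I_n.+1 -> V} | \sum_i f i == s].
pose e (d : V) := [ffun i : 'I_n.+1 => if i == ord0 then d else 0].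
have sum_e d : \sum_i e d i = d.
  rewrite (bigD1 ord0) //= ffunE eqxx big1 ?addr0 // => i /negbTE i_neq0.
  by rewrite ffunE i_neq0.
have card_fiber s' : #|fiber s'| = #|fiber 0|.
  rewrite -!sum1_card (reindex_inj (addrI (e s'))) /=; apply: eq_bigl => f.
  rewrite !inE (eq_bigr (fun i => e s' i + f i)) => [|i _]; last by rewrite ffunE.
  by rewrite big_split /= sum_e -subr_eq0 addrC addrK.
have total : #|{: {ffun 'I_n.+1 -> V}}| = (\sum_(s' : V) #|fiber s'|)%N.
  rewrite -sum1_card (partition_big (fun f : {ffun _ -> V} => \sum_i f i) xpredT) //=.
  by apply: eq_bigr => s' _; rewrite sum1_card.
have V_gt0 : (0 < #|V|)%N by apply/card_gt0P; exists 0.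
have card_all : (#|V| ^ n.+1 = #|{: {ffun 'I_n.+1 -> V}}|)%N.
  by rewrite card_ffun card_ord.
apply/eqP; rewrite card_fiber -(eqn_pmul2l V_gt0) -expnS card_all.
by rewrite total (eq_bigr _ (fun s' _ => card_fiber s')) sum_nat_const.
Qed.

Lemma card_msgs (F : finFieldType) (K L : nat) : #|{: msgs F K L}| = (#|F| ^ (K * L))%N.
Proof. by rewrite card_ffun card_mx card_ord mul1n -expnM mulnC. Qed.

Lemma card_msg_sum_fiber (F : finFieldType) (K L : nat) (s : 'rV[F]_L) : (0 < K)%N ->
  #|[pred w : msgs F K L | msg_sum w == s]| = (#|F| ^ (K.-1 * L))%N.
Proof. by move/(card_sum_fiber s); rewrite card_mx mul1n -expnM mulnC. Qed.

Lemma is_distribution_support (Qt : finType) (pQ : Qt -> R) :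
  is_distribution pQ -> exists q, 0 < pQ q.
Proof.
case=> pQ_ge0 pQ_sum1; case: (pickP (fun q => 0 < pQ q)) => [q pQq_gt0 | pQ_le0].
  by exists q.
move: pQ_sum1; rewrite big1 => [/eqP | q _]; first by rewrite eq_sym oner_eq0.
by apply/le_anti; rewrite pQ_ge0 leNgt pQ_le0.
Qed.

Section UniformMessages.
Variables (F : finFieldType) (K L : nat) (Qt : finType) (pQ : Qt -> R).
Hypothesis pQ_dist : is_distribution pQ.

Local Notation Omega := (msgs F K L * Qt)%type.
Local Notation P := (@joint_prob F K L Qt pQ).
Local Notation H := (entropy P #|F|%:R).
Local Notation S := (fun o : Omega => msg_sum o.1).

Let q_gt1 : (1 < #|F|)%N := card_finNzRing_gt1 F.

Lemma card_msgsR_gt0 : 0 < (#|F| ^ (K * L))%:R :> R.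
Proof. by rewrite ltr0n expn_gt0 ltnW. Qed.

Lemma joint_prob_ge0 o : 0 <= P o.
Proof. by case: pQ_dist => pQ_ge0 _; rewrite /joint_prob divr_ge0 // ltW // card_msgsR_gt0. Qed.

Lemma sum_outcomes (G : Omega -> R) : \sum_o G o = \sum_w \sum_qq G (w, qq).
Proof. by rewrite pair_bigA; apply: eq_bigr => -[]. Qed.

Lemma sum_joint_prob : \sum_o P o = 1.
Proof.
rewrite sum_outcomes (eq_bigr (fun _ => ((#|F| ^ (K * L))%:R)^-1)) => [|w _].
  by rewrite sumr_const card_msgs -(mulr_natr _^-1) mulVf ?gt_eqF ?card_msgsR_gt0.
by rewrite /joint_prob /= -mulr_suml; case: pQ_dist => _ ->; rewrite mul1r.
Qed.

Lemma prob_msgs_fun (T : eqType) (Y : msgs F K L -> T) y :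
  prob P (fun o => Y o.1) y = #|[pred w | Y w == y]|%:R / (#|F| ^ (K * L))%:R.
Proof.
have -> : prob P (fun o => Y o.1) y = \sum_(w | Y w == y) \sum_qq P (w, qq).
  by rewrite pair_big_dep; apply: eq_big => -[w qq] //=; rewrite andbT.
rewrite (eq_bigr (fun _ => ((#|F| ^ (K * L))%:R)^-1)) => [|w _].
  by rewrite sumr_const mulr_natl.
by rewrite /joint_prob /= -mulr_suml; case: pQ_dist => _ ->; rewrite mul1r.
Qed.

Lemma prob_rand qq : prob P (fun o => o.2) qq = pQ qq.
Proof.
have -> : prob P (fun o => o.2) qq = \sum_w \sum_(qq' | qq' == qq) P (w, qq').
  by rewrite pair_big_dep.
rewrite (eq_bigr (fun _ => pQ qq / (#|F| ^ (K * L))%:R)) => [|w _]; last first.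
  by rewrite big_pred1_eq.
by rewrite sumr_const card_msgs -(mulr_natr (_ / _)) mulfVK ?gt_eqF ?card_msgsR_gt0.
Qed.

Lemma entropy_msgs_sum : H (fun o => (o.1, msg_sum o.1)) = (K * L)%:R.
Proof.
rewrite -(log_natXV (K * L) q_gt1); apply: entropy_uniform => //;
  [exact: joint_prob_ge0 | exact: sum_joint_prob | move=> o _].
rewrite (prob_msgs_fun (fun w => (w, msg_sum w))).
have -> : #|[pred w | (w, msg_sum w) == (o.1, msg_sum o.1)]| = #|pred1 o.1|.
  by apply: eq_card => w; rewrite !inE xpair_eqE andb_idr // => /eqP->.
by rewrite card1 mul1r.
Qed.

Lemma entropy_msg_sum : (0 < K)%N -> H S = L%:R.
Proof.
move=> K_gt0; rewrite -(log_natXV L q_gt1); apply: entropy_uniform => //;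
  [exact: joint_prob_ge0 | exact: sum_joint_prob | move=> o _].
rewrite prob_msgs_fun card_msg_sum_fiber // -{2}(prednK K_gt0) mulSn expnD natrM.
by rewrite invfM mulrA mulrAC mulfV ?mul1r // pnatr_eq0 -lt0n expn_gt0 ltnW.
Qed.

Lemma entropy_outcome : H id = (K * L)%:R + H (fun o => o.2).
Proof.
rewrite !entropyE; try exact: joint_prob_ge0.
have KLE : (K * L)%:R = \sum_o P o * (K * L)%:R by rewrite -mulr_suml sum_joint_prob mul1r.
rewrite [(K * L)%:R]KLE -opprB -sumrB; congr (- _).
apply: eq_bigr => -[w qq] _; rewrite prob_rand.
have -> : prob P id (w, qq) = P (w, qq) by rewrite /prob big_pred1_eq.
have [Pwq_gt0 | /(atom_le0_eq0 joint_prob_ge0) ->] := ltP 0 (P (w, qq)); last first.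
  by rewrite !mul0r subr0.
have pQq_gt0 : 0 < pQ qq.
  by move: Pwq_gt0; rewrite pmulr_lgt0 // invr_gt0 card_msgsR_gt0.
rewrite /joint_prob /= lnM ?lnV ?invr_gt0 ?card_msgsR_gt0 // -(log_natX (K * L) q_gt1).
by rewrite mulrBl mulrBr.
Qed.

Lemma cond_mutual_infoE (T : eqType) (X : Omega -> T) : (0 < K)%N ->
  cond_mutual_info P #|F|%:R (fun o => o.1) X S =
  (K * L)%:R + H (fun o => (X o, msg_sum o.1)) - H (fun o => (o.1, X o, msg_sum o.1)) - L%:R.
Proof. by move=> K_gt0; rewrite /cond_mutual_info entropy_msgs_sum entropy_msg_sum. Qed.

Lemma cond_mutual_info_ge (T : eqType) (X : Omega -> T) : (0 < K)%N ->
  H (fun o => (X o, msg_sum o.1)) - L%:R - H (fun o => o.2) <=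
  cond_mutual_info P #|F|%:R (fun o => o.1) X S.
Proof.
move=> K_gt0; rewrite cond_mutual_infoE //.
have : H (fun o => (o.1, X o, msg_sum o.1)) <= H id.
  by apply: entropy_le_coarser => //; [exact: joint_prob_ge0 | rewrite ltr1n | move=> o o' ->].
rewrite entropy_outcome; lra.
Qed.

Lemma cond_mutual_info_eq (T : eqType) (X : Omega -> T) : (0 < K)%N ->
  (forall o o', o.1 = o'.1 -> X o = X o' -> o = o') ->
  cond_mutual_info P #|F|%:R (fun o => o.1) X S =
  H (fun o => (X o, msg_sum o.1)) - L%:R - H (fun o => o.2).
Proof.
move=> K_gt0 WX_inj; rewrite cond_mutual_infoE //.
have : H (fun o => (o.1, X o, msg_sum o.1)) = H id.
  apply/le_anti; rewrite !entropy_le_coarser ?ltr1n //; try exact: joint_prob_ge0.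
    by move=> o o' [W_eq X_eq _]; apply/esym/WX_inj.
  by move=> o o' ->.
rewrite entropy_outcome; lra.
Qed.

End UniformMessages.

Lemma card_bigcup_le (I T : finType) (A : {pred I}) (B : I -> {set T}) :
  (#|\bigcup_(i in A) B i| <= \sum_(i in A) #|B i|)%N.
Proof.
elim/big_rec2: _ => [|i n U _ U_le]; first by rewrite cards0.
by rewrite (leq_trans (leq_card_setU _ _).1) ?leq_add2l.
Qed.

Lemma eq_sum_le_nat (I : finType) (f h : I -> nat) :
  (forall i, h i <= f i)%N -> (\sum_i f i <= \sum_i h i)%N -> forall i, f i = h i.
Proof.
move=> hf sum_fh i; have /leqifP := leqif_sum (fun i (_ : true) => leqif_eq (hf i)).
by rewrite ltnNge sum_fh; case: ifP => // /forallP/(_ i)/eqP ->.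
Qed.

Definition upd_msg (F : finFieldType) (K L : nat) (w : msgs F K L) k v : msgs F K L :=
  [ffun k' => if k' == k then v else w k'].

Lemma msg_sum_upd (F : finFieldType) (K L : nat) (w : msgs F K L) k v :
  msg_sum (upd_msg w k v) = msg_sum w + (v - w k).
Proof.
rewrite /msg_sum (bigD1 k) // [in RHS](bigD1 k) //= ffunE eqxx.
rewrite addrAC addrCA subrr addr0; congr (_ + _).
by apply: eq_bigr => k' /negbTE k'_neq_k; rewrite ffunE k'_neq_k.
Qed.

Lemma upd_msgE (F : finFieldType) (K L : nat) (w : msgs F K L) k v k' :
  upd_msg w k v k' = if k' == k then v else w k'.
Proof. by rewrite ffunE. Qed.

Section Converse.
Variables (F : finFieldType) (K N Nr M L : nat) (Qt : finType) (pQ : Qt -> R)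
  (Z : 'I_N -> {set 'I_K}) (T : 'I_N -> nat)
  (psi : forall n : 'I_N, msgs F K L -> Qt -> 'rV[F]_(T n)).
Hypotheses (K_gt0 : (0 < K)%N) (Nr_le_N : (Nr <= N)%N) (L_gt0 : (0 < L)%N)
  (N_dvd_K : (N %| K)%N) (M_def : M = (K %/ N * (N - Nr + 1))%N) (M_gt0 : (0 < M)%N)
  (g_dvd_N : (N - Nr + 1 %| N)%N).
Hypothesis pQ_dist : is_distribution pQ.
Hypothesis Z_le : forall n, (#|Z n| <= M)%N.
Hypothesis psi_local : forall n (w w' : msgs F K L) q,
  (forall k, k \in Z n -> w k = w' k) -> psi n w q = psi n w' q.
Hypothesis decodable : forall A : {set 'I_N}, #|A| = Nr ->
  exists dec : {dffun forall n : 'I_N, 'rV[F]_(T n)} -> 'rV[F]_L,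
    (forall x y : {dffun forall n : 'I_N, 'rV[F]_(T n)},
        (forall n, n \in A -> x n = y n) -> dec x = dec y) /\
    (forall (w : msgs F K L) q, 0 < pQ q ->
        dec (transmissions psi (w, q)) = msg_sum w).

Local Notation g := (N - Nr + 1)%N.
Local Notation m := (N %/ (N - Nr + 1))%N.

Definition holders k := [set n | k \in Z n].

Lemma msg_sum_eq_of_agree (A : {set 'I_N}) (w w' : msgs F K L) q :
  #|A| = Nr -> 0 < pQ q -> (forall n, n \in A -> psi n w q = psi n w' q) ->
  msg_sum w = msg_sum w'.
Proof.
move=> A_card pQq_gt0 wA; have [dec [dec_local dec_ok]] := decodable A_card.
rewrite -!(dec_ok _ q) //; apply: dec_local => n nA; rewrite !ffunE; exact: wA.
Qed.

Lemma card_holders_ge k : (g <= #|holders k|)%N.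
Proof.
(* Otherwise some N_r servers hold no copy of [k] and cannot tell [0] from [e_k]. *)
rewrite leqNgt; apply/negP => holders_lt.
have : (Nr <= #|~: holders k|)%N.
  by have := cardsC (holders k); rewrite card_ord; lia.
case/exists_subset_card => A /subsetP A_sub A_card.
have [q pQq_gt0] := is_distribution_support pQ_dist.
pose one := const_mx 1 : 'rV[F]_L.
have agree n : n \in A -> psi n 0 q = psi n (upd_msg 0 k one) q.
  move/A_sub; rewrite !inE => k_notin_Zn; apply: psi_local => k' k'_Zn.
  by rewrite upd_msgE; case: eqP k'_Zn => // ->; rewrite (negbTE k_notin_Zn).
have := msg_sum_eq_of_agree A_card pQq_gt0 agree.
rewrite msg_sum_upd -{1}[msg_sum 0]addr0 => /addrI.
move/(congr1 (fun v : 'rV[F]_L => v 0 (Ordinal L_gt0))).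
by rewrite !mxE ffunE mxE subr0 => /eqP; rewrite eq_sym oner_eq0.
Qed.

Lemma sum_card_holders : (\sum_k #|holders k| = \sum_n #|Z n|)%N.
Proof.
rewrite (eq_bigr (fun k => \sum_n (k \in Z n : nat))%N) => [|k _]; last first.
  rewrite -sum1_card [LHS]big_mkcond; apply: eq_bigr => n _.
  by rewrite inE; case: (k \in Z n).
rewrite exchange_big; apply: eq_bigr => n _; rewrite -sum1_card [RHS]big_mkcond.
by apply: eq_bigr => k _; case: (k \in Z n).
Qed.

Lemma N_mul_M : (N * M = K * g)%N.
Proof. by rewrite M_def mulnA [(N * _)%N]mulnC divnK. Qed.

Lemma card_holders k : #|holders k| = g.
Proof.
apply: (@eq_sum_le_nat _ (fun k => #|holders k|) (fun _ => g)) => [k'|].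
  exact: card_holders_ge.
rewrite sum_card_holders sum_nat_const card_ord -N_mul_M.
have : (\sum_n #|Z n| <= \sum_(n : 'I_N) M)%N by apply: leq_sum => n _.
by rewrite sum_nat_const card_ord.
Qed.

Lemma card_Z n : #|Z n| = M.
Proof.
apply/esym/(@eq_sum_le_nat _ (fun _ => M) (fun n => #|Z n|)) => //.
rewrite -sum_card_holders sum_nat_const card_ord N_mul_M.
by rewrite (eq_bigr _ (fun k _ => card_holders k)) sum_nat_const card_ord.
Qed.

Lemma exists_held_msg n : exists k, k \in Z n.
Proof. by apply/set0Pn; rewrite -card_gt0 card_Z. Qed.

Lemma recover_msg n k (w w' : msgs F K L) q : k \in Z n -> 0 < pQ q ->
  (forall k', k' \in Z n -> k' != k -> w k' = w' k') ->
  psi n w q = psi n w' q -> w k = w' k.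
Proof.
(* The N_r servers outside the other holders of [k] see [w] and [w''] alike. *)
move=> k_Zn pQq_gt0 ww' psi_eq; pose w'' := upd_msg w k (w' k).
pose A := ~: (holders k :\ n).
have A_card : #|A| = Nr.
  have := cardsC (holders k :\ n); have := cardsD1 n (holders k).
  by rewrite /A inE k_Zn card_holders card_ord; lia.
have agree n' : n' \in A -> psi n' w q = psi n' w'' q.
  rewrite !inE negb_and negbK => /orP[/eqP -> | k_notin]; last first.
    apply: psi_local => k' k'_Zn; rewrite upd_msgE.
    by case: eqP k'_Zn => // ->; rewrite (negbTE k_notin).
  rewrite psi_eq; apply: psi_local => k' k'_Zn; rewrite upd_msgE.
  by case: eqP => [-> // | /eqP k'_neq_k]; rewrite ww'.
have := msg_sum_eq_of_agree A_card pQq_gt0 agree.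
rewrite msg_sum_upd -{1}[msg_sum w]addr0 => /addrI /eqP.
by rewrite eq_sym subr_eq0 => /eqP.
Qed.

Lemma load_ge n : (L <= T n)%N.
Proof.
have [k k_Zn] := exists_held_msg n; have [q pQq_gt0] := is_distribution_support pQ_dist.
have inj : injective (fun v => psi n (upd_msg 0 k v) q).
  move=> v v' /(recover_msg k_Zn pQq_gt0); rewrite !upd_msgE eqxx; apply.
  by move=> k' _ /negbTE k'_neq_k; rewrite !upd_msgE k'_neq_k.
have := leq_card _ inj; rewrite !card_mx !mul1n leq_exp2l //.
exact: card_finNzRing_gt1.
Qed.

Lemma comm_cost_ge : Nr%:R <= comm_cost Nr L T.
Proof.
rewrite /comm_cost ler_pdivlMr ?ltr0n // -natrM ler_nat.
have [A _ A_card] : exists2 A : {set 'I_N}, A \subset setT & #|A| = Nr.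
  by apply: exists_subset_card; rewrite cardsT card_ord.
apply: leq_trans (leq_bigmax_cond _ (introT eqP A_card)).
by rewrite -A_card -sum_nat_const leq_sum // => n _; apply: load_ge.
Qed.

Definition determines (Ks : {set 'I_K}) q := forall w w' : msgs F K L,
  transmissions psi (w, q) = transmissions psi (w', q) ->
  (forall k, k \notin Ks -> w k = w' k) -> w = w'.

Lemma exists_determining_set q i : 0 < pQ q -> (i <= m)%N ->
  exists2 Ks : {set 'I_K}, #|Ks| = i & determines Ks q.
Proof.
move=> pQq_gt0; elim: i => [_ | i IHi i_lt].
  by exists set0 => [|w w' _ ww']; [rewrite cards0 | apply/ffunP => k; rewrite ww' ?inE].
have [Ks Ks_card Ks_det] := IHi (ltnW i_lt).
pose U := \bigcup_(k in Ks) holders k.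
have U_lt : (#|U| < N)%N.
  apply: leq_ltn_trans (card_bigcup_le _ _) _.
  rewrite (eq_bigr _ (fun k _ => card_holders k)) sum_nat_const Ks_card.
  by have := leq_mul i_lt (leqnn g); rewrite divnK // mulSn; lia.
have : (0 < #|~: U|)%N by have := cardsC U; rewrite card_ord; lia.
(* A server [n] outside [U] stores some [k] but nothing of [Ks], so its
   transmission pins down [w k] once the messages outside [k |: Ks] are fixed. *)
case/card_gt0P => n; rewrite inE => n_notin_U; have [k k_Zn] := exists_held_msg n.
have Ks_notin_Zn k' : k' \in Ks -> k' \notin Z n.
  move=> k'_Ks; apply: contraNN n_notin_U => k'_Zn.
  by apply/bigcupP; exists k'; rewrite ?inE.
exists (k |: Ks).
  by rewrite cardsU1 Ks_card (contraNN (Ks_notin_Zn k) _) ?k_Zn.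
move=> w w' X_eq ww'; apply: Ks_det => // k' k'_notin.
have [-> | k'_neq_k] := eqVneq k' k; last by apply: ww'; rewrite !inE negb_or k'_neq_k.
apply: (recover_msg k_Zn pQq_gt0) => [k'' k''_Zn k''_neq_k|].
  by apply: ww'; rewrite !inE negb_or k''_neq_k; apply: contraTN k''_Zn; apply: Ks_notin_Zn.
have := congr1 (fun x : {dffun forall n, 'rV[F]_(T n)} => x n) X_eq.
by rewrite !ffunE.
Qed.

Lemma card_transmissions_fiber q x : 0 < pQ q ->
  (#|[pred w : msgs F K L | transmissions psi (w, q) == x]| <=
   #|F| ^ ((K - m) * L))%N.
Proof.
move=> pQq_gt0; have [Ks Ks_card Ks_det] := exists_determining_set pQq_gt0 (leqnn _).
pose outside (w : msgs F K L) : {ffun {k | k \notin Ks} -> 'rV[F]_L} :=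
  [ffun k => w (val k)].
have outside_inj : {in [pred w | transmissions psi (w, q) == x] &, injective outside}.
  move=> w w' /eqP X_w /eqP X_w' outside_eq; apply: Ks_det => [|k k_notin].
    by rewrite X_w X_w'.
  have := congr1 (fun f : {ffun _ -> 'rV[F]_L} => f (exist _ k k_notin)) outside_eq.
  by rewrite !ffunE.
have card_outside : #|[pred k : 'I_K | k \notin Ks]| = (K - m)%N.
  have -> : #|[pred k : 'I_K | k \notin Ks]| = #|~: Ks| by apply: eq_card => k; rewrite !inE.
  by have := cardsC Ks; rewrite Ks_card card_ord; lia.
have := @leq_card_in _ _ outside _ outside_inj.
by rewrite card_ffun card_mx mul1n card_sig card_outside -expnM mulnC.
Qed.

Local Notation P := (@joint_prob F K L Qt pQ).
Local Notation H := (entropy P #|F|%:R).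

Lemma prob_transmissions_le x :
  prob P (transmissions psi) x <= ((#|F| ^ (m * L))%:R)^-1.
Proof.
pose c : R := (#|F| ^ (K * L))%:R; pose B := (#|F| ^ ((K - m) * L))%N.
have c_gt0 : 0 < c := card_msgsR_gt0 F K L.
rewrite /prob big_mkcond sum_outcomes exchange_big /=.
apply: le_trans (_ : \sum_q (pQ q / c) *+ B <= _).
  apply: ler_sum => q _; rewrite -big_mkcond /= /joint_prob /= sumr_const RdivE.
  case: pQ_dist => pQ_ge0 _; have [pQq_gt0 | /(atom_le0_eq0 pQ_ge0) ->] := ltP 0 (pQ q).
    by rewrite ler_wpMn2l ?divr_ge0 ?ltW // card_transmissions_fiber.
  by rewrite !mul0r !mul0rn.
have m_le_K : (m <= K)%N := leq_trans (leq_div N g) (dvdn_leq K_gt0 N_dvd_K).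
have c_split : c = B%:R * (#|F| ^ (m * L))%:R.
  by rewrite /c /B -natrM -expnD -mulnDl subnK.
have q_gt0 : (0 < #|F|)%N := ltnW (card_finNzRing_gt1 F).
have B_neq0 : B%:R != 0 :> R by rewrite pnatr_eq0 -lt0n expn_gt0 q_gt0.
rewrite sumrMnl -mulr_suml; case: pQ_dist => _ ->; rewrite mul1r -(mulr_natr c^-1 B).
by rewrite c_split invfM mulrAC mulVf ?mul1r.
Qed.

Lemma entropy_transmissions_ge :
  (m * L)%:R <= H (fun o => (transmissions psi o, msg_sum o.1)).
Proof.
have q_gt1 := card_finNzRing_gt1 F.
rewrite -(log_natXV (m * L) q_gt1); apply: entropy_ge_of_prob_le.
- exact: joint_prob_ge0.
- by rewrite ltr1n.
- exact: sum_joint_prob.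
move=> o _; apply: le_trans (prob_transmissions_le (transmissions psi o)).
by apply: prob_le_coarser => [o' | o' [->]] //; apply: joint_prob_ge0.
Qed.

Lemma rand_entropy_ge :
  cond_mutual_info P #|F|%:R (fun o => o.1) (transmissions psi) (fun o => msg_sum o.1) = 0 ->
  ((m)%:R - 1) * L%:R <= H (fun o => o.2).
Proof.
move=> secure; rewrite mulrBl mul1r -natrM.
apply: le_trans (_ : H (fun o => (transmissions psi o, msg_sum o.1)) - L%:R <= _).
  by rewrite lerD2r entropy_transmissions_ge.
by rewrite -subr_le0 -secure cond_mutual_info_ge.
Qed.

End Converse.

Lemma comm_cost_const (N Nr L : nat) : (Nr <= N)%N -> (0 < L)%N ->
  comm_cost Nr L (fun _ : 'I_N => L) = Nr%:R.
Proof.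
move=> Nr_le_N L_gt0; rewrite /comm_cost RdivE.
have [A0 _ A0_card] : exists2 A : {set 'I_N}, A \subset setT & #|A| = Nr.
  by apply: exists_subset_card; rewrite cardsT card_ord.
have -> : (\max_(A : {set 'I_N} | #|A| == Nr) \sum_(n in A) L = Nr * L)%N.
  apply/eqP; rewrite eqn_leq; apply/andP; split.
    by apply/bigmax_leqP => A /eqP A_card; rewrite sum_nat_const A_card.
  by apply: leq_trans (leq_bigmax_cond _ (introT eqP A0_card)); rewrite sum_nat_const A0_card.
by rewrite natrM mulfK // pnatr_eq0 -lt0n.
Qed.

Section BlockScheme.
Variables (F : finFieldType) (K N Nr M L : nat).
Hypotheses (K_gt0 : (0 < K)%N) (N_gt0 : (0 < N)%N) (Nr_le_N : (Nr <= N)%N)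
  (L_gt0 : (0 < L)%N) (N_dvd_K : (N %| K)%N)
  (M_def : M = (K %/ N * (N - Nr + 1))%N) (M_gt0 : (0 < M)%N)
  (g_dvd_N : (N - Nr + 1 %| N)%N).

Local Notation g := (N - Nr + 1)%N.
Local Notation m := (N %/ (N - Nr + 1))%N.

Lemma g_gt0 : (0 < g)%N. Proof. by rewrite addn1. Qed.

Lemma m_mul_g : (m * g = N)%N. Proof. exact: divnK. Qed.

Lemma m_gt0 : (0 < m)%N.
Proof. by rewrite divn_gt0 ?g_gt0 // dvdn_leq. Qed.

Lemma m_mul_M : (m * M = K)%N.
Proof. by rewrite M_def mulnCA m_mul_g divnK. Qed.

Lemma server_group_lt (n : 'I_N) : (n %/ g < m)%N.
Proof. by rewrite ltn_divLR ?g_gt0 // m_mul_g. Qed.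

Definition server_group (n : 'I_N) : 'I_m := Ordinal (server_group_lt n).

Lemma msg_group_lt (k : 'I_K) : (k %/ M < m)%N.
Proof. by rewrite ltn_divLR // m_mul_M. Qed.

Definition msg_group (k : 'I_K) : 'I_m := Ordinal (msg_group_lt k).

Definition keys := {ffun 'I_m -> 'rV[F]_L}.

Definition key_prob (qq : keys) : R :=
  if \sum_j qq j == 0 then ((#|F| ^ (m.-1 * L))%:R)^-1 else 0.

Definition block_Z (n : 'I_N) : {set 'I_K} := [set k | msg_group k == server_group n].

Definition block_sum (w : msgs F K L) (j : 'I_m) : 'rV[F]_L :=
  \sum_(k | msg_group k == j) w k.

Definition block_psi (n : 'I_N) (w : msgs F K L) (qq : keys) : 'rV[F]_L :=
  block_sum w (server_group n) + qq (server_group n).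

Local Notation X := (transmissions (T := fun _ => L) block_psi).

Lemma key_prob_dist : is_distribution key_prob.
Proof.
have q_gt0 : (0 < #|F|)%N := ltnW (card_finNzRing_gt1 F).
split => [qq | ]; first by rewrite /key_prob; case: ifP; rewrite ?invr_ge0 ?ler0n.
rewrite /key_prob -big_mkcond /= sumr_const card_sum_fiber ?m_gt0 // card_mx mul1n -expnM.
by rewrite mulnC -(mulr_natr _^-1) mulVf // pnatr_eq0 -lt0n expn_gt0 q_gt0.
Qed.

Lemma card_block_Z n : (#|block_Z n| <= M)%N.
Proof.
pose offset (k : 'I_K) : 'I_M := Ordinal (ltn_pmod k M_gt0).
have offset_inj : {in block_Z n &, injective offset}.
  move=> k1 k2; rewrite !inE => /eqP k1_n /eqP k2_n /(congr1 val) /= mod_eq.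
  have /(congr1 val) /= div_eq := etrans k1_n (esym k2_n).
  by apply: val_inj; rewrite /= (divn_eq k1 M) (divn_eq k2 M) mod_eq div_eq.
by have := @leq_card_in _ _ offset _ offset_inj; rewrite card_ord.
Qed.

Lemma block_psi_local n (w w' : msgs F K L) qq :
  (forall k, k \in block_Z n -> w k = w' k) -> block_psi n w qq = block_psi n w' qq.
Proof.
by move=> ww'; congr (_ + _); apply: eq_bigr => k k_n; apply: ww'; rewrite inE.
Qed.

Lemma sum_block_sum w : \sum_j block_sum w j = msg_sum w.
Proof. by rewrite /msg_sum (partition_big msg_group xpredT). Qed.

Lemma group_meets (A : {set 'I_N}) j : (Nr <= #|A|)%N ->
  exists2 n, n \in A & server_group n == j.
Proof.
move=> A_card; apply/exists_inP/contraT; rewrite negb_exists_in => /forall_inP A_avoids.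
have server_lt (i : 'I_g) : (j * g + i < N)%N.
  apply: (@leq_trans (j.+1 * g)); first by rewrite mulSn addnC ltn_add2r.
  by apply: leq_trans (eq_leq m_mul_g); rewrite leq_mul2r ltn_ord orbT.
pose server (i : 'I_g) : 'I_N := Ordinal (server_lt i).
have server_inj : injective server by move=> i i' /(congr1 val) /addnI /val_inj.
have : [set server i | i : 'I_g] \subset ~: A.
  apply/subsetP => _ /imsetP [i _ ->]; rewrite inE; apply/negP => /A_avoids /negP; apply.
  by rewrite -val_eqE /= divnMDl ?g_gt0 // (divn_small (ltn_ord i)) addn0.
move/subset_leq_card; rewrite card_imset // card_ord => g_le.
have := cardsC A; rewrite card_ord => A_compl; exfalso.
by move: g_le A_compl A_card; move: #|~: A| => c; lia.
Qed.

Definition block_decoder (A : {set 'I_N}) (x : {dffun forall n : 'I_N, 'rV[F]_L}) : 'rV[F]_L :=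
  \sum_j if [pick n in A | server_group n == j] is Some n then x n else 0.

Lemma block_decodable (A : {set 'I_N}) : #|A| = Nr ->
  (forall x y : {dffun forall n : 'I_N, 'rV[F]_L},
      (forall n, n \in A -> x n = y n) -> block_decoder A x = block_decoder A y) /\
  (forall w qq, 0 < key_prob qq -> block_decoder A (X (w, qq)) = msg_sum w).
Proof.
move=> A_card; split=> [x y xy | w qq].
  by apply: eq_bigr => j _; case: pickP => // n /andP [/xy].
rewrite /key_prob; case: eqP => [keys_sum0 _ | _]; last by rewrite ltxx.
have -> : msg_sum w = \sum_j (block_sum w j + qq j).
  by rewrite big_split /= keys_sum0 addr0 sum_block_sum.
apply: eq_bigr => j _.
case: pickP => [n /andP [_ /eqP <-] | no_server]; first by rewrite ffunE.
have [n nA /eqP n_j] := group_meets j (eq_leq (esym A_card)).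
by have := no_server n; rewrite nA n_j eqxx.
Qed.

Local Notation P := (@joint_prob F K L keys key_prob).
Local Notation H := (entropy P #|F|%:R).

Definition shift_keys (w w' : msgs F K L) (qq : keys) : keys :=
  [ffun j => qq j + block_sum w j - block_sum w' j].

Lemma transmissions_eq w w' qq qq' :
  (X (w', qq') == X (w, qq)) = (qq' == shift_keys w w' qq).
Proof.
apply/eqP/eqP => [X_eq | ->]; last first.
  by apply/ffunP => n; rewrite !ffunE /block_psi ffunE addrC subrK addrC.
apply/ffunP => j; rewrite ffunE.
have [n _ /eqP <-] : exists2 n, n \in setT & server_group n == j.
  by apply: group_meets; rewrite cardsT card_ord.
have := congr1 (fun x : {dffun forall n : 'I_N, 'rV[F]_L} => x n) X_eq.
by rewrite !ffunE /block_psi /= [qq _ + _]addrC => <-; rewrite addrC addKr.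
Qed.

Lemma sum_shift_keys w w' qq :
  \sum_j shift_keys w w' qq j = \sum_j qq j + msg_sum w - msg_sum w'.
Proof.
rewrite (eq_bigr (fun j => qq j + block_sum w j - block_sum w' j)) => [|j _]; last first.
  by rewrite ffunE.
by rewrite sumrB big_split /= !sum_block_sum.
Qed.

Lemma joint_prob_pos_keys (o : msgs F K L * keys) : 0 < P o -> \sum_j o.2 j = 0.
Proof.
case: o => w qq; rewrite /joint_prob /key_prob /=.
by case: eqP => // _; rewrite RdivE mul0r ltxx.
Qed.

Lemma prob_block_transmissions w (qq : keys) : \sum_j qq j = 0 ->
  prob P (fun o => (X o, msg_sum o.1)) (X (w, qq), msg_sum w) =
  ((#|F| ^ (m * L))%:R)^-1.
Proof.
move=> keys_sum0; pose c : R := (#|F| ^ (K * L))%:R.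
pose cq : R := ((#|F| ^ (m.-1 * L))%:R)^-1.
rewrite /prob big_mkcond sum_outcomes /=.
transitivity (\sum_(w' : msgs F K L) if msg_sum w' == msg_sum w then cq / c else 0).
  apply: eq_bigr => w' _; case: eqP => [S_eq | S_neq]; last first.
    by rewrite big1 // => qq' _; rewrite xpair_eqE (introF eqP S_neq) andbF.
  rewrite (eq_bigr (fun qq' => if qq' == shift_keys w w' qq then key_prob qq' / c else 0)).
    rewrite -big_mkcond big_pred1_eq /key_prob sum_shift_keys keys_sum0 S_eq.
    by rewrite add0r subrr eqxx.
  by move=> qq' _; rewrite xpair_eqE S_eq eqxx andbT transmissions_eq /joint_prob RdivE.
rewrite -big_mkcond /= sumr_const card_msg_sum_fiber // -(mulr_natr (cq / c)) /cq /c.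
have q_neq0 : (#|F|%:R : R) != 0 by rewrite pnatr_eq0 -lt0n ltnW ?card_finNzRing_gt1.
have KL : (K * L = L + K.-1 * L)%N by rewrite -mulSn prednK.
have mL : (m * L = L + m.-1 * L)%N by rewrite -mulSn prednK ?m_gt0.
by rewrite KL mL !natrX !exprD; field; rewrite !expf_neq0.
Qed.

Lemma entropy_block_transmissions : H (fun o => (X o, msg_sum o.1)) = (m * L)%:R.
Proof.
rewrite -(log_natXV (m * L) (card_finNzRing_gt1 F)).
apply: entropy_uniform => [o | | [w qq] /joint_prob_pos_keys /prob_block_transmissions //].
- exact: joint_prob_ge0 key_prob_dist o.
- exact: sum_joint_prob key_prob_dist.
Qed.

Lemma entropy_keys : H (fun o => o.2) = (m.-1 * L)%:R.
Proof.
rewrite -(log_natXV (m.-1 * L) (card_finNzRing_gt1 F)).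
apply: entropy_uniform => [o | | o /joint_prob_pos_keys keys_sum0].
- exact: joint_prob_ge0 key_prob_dist o.
- exact: sum_joint_prob key_prob_dist.
by rewrite prob_rand /key_prob ?keys_sum0 ?eqxx //; apply: key_prob_dist.
Qed.

Lemma block_scheme_secure :
  @secure_scheme F K N Nr M L keys key_prob block_Z (fun _ => L) block_psi.
Proof.
split.
- exact: key_prob_dist.
- exact: card_block_Z.
- exact: block_psi_local.
- by move=> A A_card; exists (block_decoder A); apply: block_decodable.
have msgs_transmissions_inj (o o' : msgs F K L * keys) : o.1 = o'.1 -> X o = X o' -> o = o'.
  case: o o' => [w qq] [w' qq'] /= <- /esym/eqP; rewrite transmissions_eq => /eqP ->.
  by congr pair; apply/ffunP => j; rewrite ffunE addrK.
rewrite (cond_mutual_info_eq key_prob_dist K_gt0 msgs_transmissions_inj).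
rewrite entropy_block_transmissions entropy_keys -{1}(prednK m_gt0) mulSn natrD.
lra.
Qed.

Lemma block_rand_size : rand_size F K L key_prob = N%:R / g%:R - 1.
Proof.
rewrite /rand_size entropy_keys -natf_div // -{2}(prednK m_gt0) -natr1 addrK.
by rewrite natrM RdivE mulfK // pnatr_eq0 -lt0n.
Qed.

End BlockScheme.

Lemma secure_scheme_bounds (F : finFieldType) (K N Nr M L : nat) (Qt : finType)
  (pQ : Qt -> R) (Z : 'I_N -> {set 'I_K}) (T : 'I_N -> nat)
  (psi : forall n : 'I_N, msgs F K L -> Qt -> 'rV[F]_(T n)) :
  (0 < K)%N -> (Nr <= N)%N -> (0 < L)%N -> (N %| K)%N ->
  M = (K %/ N * (N - Nr + 1))%N -> (0 < M)%N -> ((N - Nr + 1) %| N)%N ->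
  @secure_scheme F K N Nr M L Qt pQ Z T psi ->
  Nr%:R <= comm_cost Nr L T /\ N%:R / (N - Nr + 1)%:R - 1 <= rand_size F K L pQ.
Proof.
move=> K_gt0 Nr_le_N L_gt0 N_dvd_K M_def M_gt0 g_dvd_N [pQ_dist Z_le psi_local decodable secure].
split; first exact: (comm_cost_ge K_gt0 Nr_le_N L_gt0 N_dvd_K M_def M_gt0 g_dvd_N pQ_dist
  Z_le psi_local decodable).
rewrite /rand_size -natf_div // RdivE ler_pdivlMr ?ltr0n //.
exact: (rand_entropy_ge K_gt0 Nr_le_N L_gt0 N_dvd_K M_def M_gt0 g_dvd_N pQ_dist
  Z_le psi_local decodable secure).
Qed.

Theorem theorem4 (K N Nr M : nat) :
  (0 < K)%N -> (0 < N)%N -> (0 < Nr)%N -> (0 < M)%N -> (Nr <= N)%N ->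
  (N %| K)%N ->
  M = (K %/ N * (N - Nr + 1))%N ->
  ((N - Nr + 1) %| N)%N ->
  exists q0 : nat, forall F : finFieldType, (q0 <= #|F|)%N ->
  forall L : nat, (0 < L)%N ->
  exists Rstar : R,
    is_min (comm_achievable F K N Nr M L) Rstar /\
    is_min (rand_achievable F K N Nr M L Rstar)
           ((N%:R / (N - Nr + 1)%:R) - 1).
Proof.
move=> K_gt0 N_gt0 _ M_gt0 Nr_le_N N_dvd_K M_def g_dvd_N.
(* The block scheme works over every finite field. *)
exists 0%N => F _ L L_gt0; exists Nr%:R.
have block_secure :=
  block_scheme_secure F K_gt0 N_gt0 Nr_le_N L_gt0 N_dvd_K M_def M_gt0 g_dvd_N.
have block_cost := comm_cost_const Nr_le_N L_gt0.
have bounds Qt pQ Z T psi := @secure_scheme_bounds F K N Nr M L Qt pQ Z T psi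
  K_gt0 Nr_le_N L_gt0 N_dvd_K M_def M_gt0 g_dvd_N.
split; split.
- by do 5 eexists; split; [exact: block_secure | exact: block_cost].
- by move=> _ [Qt [pQ [Z [T [psi [/bounds [cost_ge _] <-]]]]]].
- by do 5 eexists; split; [exact: block_secure | exact: block_cost | exact: block_rand_size].
- by move=> _ [Qt [pQ [Z [T [psi [/bounds [_ rand_ge] _ <-]]]]]].
Qed.
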